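(* Let $f,g:\mathbb{R}^n\to\mathbb{R}\cup\{+\infty\}$ be two functions with nonempty convex domains and $S,R:\mathbb{R}^n\to\mathbb{R}\cup\{\pm\infty\}$ be even functions. (i) If $f$ is directionally $S$-smooth, then its Legendre transform $f^*$ is directionally $S^*$-convex. (ii) If $g$ is directionally $R$-convex, then $g^*$ is directionally $R^*$-smooth.
   Context: A function $h$ with convex domain is directionally $S$-smooth if $h((1-t)x_0+tx_1)+t(1-t)S(x_1-x_0)\ge(1-t)h(x_0)+th(x_1)$ for all $t\in(0,1)$ and all $x_0,x_1\in\mathbb{R}^n$ with $(1-t)x_0+tx_1\in\mathrm{dom}\,h$; it is directionally $R$-convex if $h((1-t)x_0+tx_1)+t(1-t)R(x_1-x_0)\le(1-t)h(x_0)+th(x_1)$ for all $t\in(0,1)$ and all $x_0,x_1\in\mathrm{dom}\,h$. Legendre transforms: $f^*(y)=\sup_x\{\langle x,y\rangle-f(x)\}$, $S^*(v)=\sup_u\{\langle u,v\rangle-S(u)\}$. *)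

From HB Require Import structures.
From mathcomp Require Import all_boot all_order all_algebra.
From mathcomp Require Import all_classical all_reals.
From mathcomp Require Import ereal.
Set Implicit Arguments. Unset Strict Implicit. Unset Printing Implicit Defensive.
Import Order.TTheory GRing.Theory Num.Theory.
Local Open Scope classical_set_scope.
Local Open Scope ring_scope.

Definition dotp (R : realType) (n : nat) (x y : 'rV[R]_n) : R :=
  \sum_(i < n) x ord0 i * y ord0 i.

Definition dom (R : realType) (n : nat) (h : 'rV[R]_n -> \bar R) : set 'rV[R]_n :=
  [set x | (h x < +oo)%E].

Definition convex_dom (R : realType) (n : nat) (A : set 'rV[R]_n) : Prop :=
  forall (x y : 'rV[R]_n) (t : R), A x -> A y -> 0 < t < 1 ->
    A ((1 - t) *: x + t *: y).

Definition even_fun (R : realType) (n : nat) (S : 'rV[R]_n -> \bar R) : Prop :=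
  forall u, S (- u) = S u.

Definition legendre (R : realType) (n : nat) (f : 'rV[R]_n -> \bar R)
  : 'rV[R]_n -> \bar R :=
  fun y => ereal_sup [set ((dotp x y)%:E - f x)%E | x in [set: 'rV[R]_n]].

Definition cmb (R : realType) (n : nat) (t : R) (x0 x1 : 'rV[R]_n) : 'rV[R]_n :=
  (1 - t) *: x0 + t *: x1.

Definition dir_smooth (R : realType) (n : nat) (S h : 'rV[R]_n -> \bar R) : Prop :=
  forall (t : R) (x0 x1 : 'rV[R]_n), 0 < t < 1 ->
    dom h (cmb t x0 x1) ->
    ((1 - t)%R%:E * h x0 + t%:E * h x1 <=
       h (cmb t x0 x1) + (t * (1 - t))%R%:E * S (x1 - x0)%R)%E.

Definition dir_convex (R : realType) (n : nat) (Q h : 'rV[R]_n -> \bar R) : Prop :=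
  forall (t : R) (x0 x1 : 'rV[R]_n), 0 < t < 1 ->
    dom h x0 -> dom h x1 ->
    (h (cmb t x0 x1) + (t * (1 - t))%R%:E * Q (x1 - x0)%R <=
       (1 - t)%R%:E * h x0 + t%:E * h x1)%E.

From HB Require Import structures.
From mathcomp Require Import all_boot all_order all_algebra.
From mathcomp Require Import all_classical all_reals.
From mathcomp Require Import ereal.
From mathcomp Require Import lra ring.
Import Order.TTheory GRing.Theory Num.Theory.
Local Open Scope classical_set_scope.
Local Open Scope ring_scope.

(* Both parts rest on the identity
     (1-t)<x0,y0> + t<x1,y1> = <x_t,y_t> + t(1-t)<x1-x0,y1-y0>
   for the convex combinations x_t, y_t.  For (i), put x0 = x - t u and
   x1 = x + (1-t) u, so that x_t = x and x1 - x0 = u: smoothness of f along u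
   and Fenchel-Young at (x0,y0) and (x1,y1) bound
   <x,y_t> - f x + t(1-t)(<u,y1-y0> - S u) by (1-t)f*(y0) + t f*(y1), and
   taking suprema over x and u gives the claim.  For (ii), convexity of g and
   Fenchel-Young for g at (x_t,y_t) and for Q at (x1-x0,y1-y0) bound
   (1-t)(<x0,y0> - g x0) + t(<x1,y1> - g x1) by g*(y_t) + t(1-t)Q*(y1-y0);
   take suprema over x0 and x1. *)

Section ereal_sup_sum.
Context {R : realType}.
Implicit Types (A B : set (\bar R)) (x r : \bar R).
Local Open Scope ereal_scope.

Lemma ge_ereal_supDl A x r :
  (forall y, A y -> x + y <= r) -> x + ereal_sup A <= r.
Proof.
case: x => [x| |] Ar; last by rewrite addNye leNye.
- rewrite addeC -leeBrDr //; apply: ge_ereal_sup => y Ay.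
  by rewrite leeBrDr // addeC; exact: Ar.
- have [->|supANy] := eqVneq (ereal_sup A) -oo; first by rewrite addeNy leNye.
  have [y Ay yNy] : exists2 y, A y & -oo < y.
    by apply: ereal_sup_gt; rewrite ltNye.
  have := Ar y Ay; rewrite addye -?ltNye // leye_eq => /eqP->.
  exact: leey.
Qed.

Lemma ge_ereal_supD A B r :
  (forall x y, A x -> B y -> x + y <= r) -> ereal_sup A + ereal_sup B <= r.
Proof.
move=> ABr; apply: ge_ereal_supDl => y By.
by rewrite addeC; apply: ge_ereal_supDl => x Ax; rewrite addeC; exact: ABr.
Qed.

End ereal_sup_sum.

Section positive_combination.
Context {R : realType}.
Local Open Scope ereal_scope.

Lemma pos_comb_gtNy {a b : R} {x y : \bar R} : (0 < a)%R -> (0 < b)%R ->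
  x != -oo -> y != -oo -> -oo < a%:E * x + b%:E * y.
Proof.
move=> a0 b0; case: x => [x| |] // _; case: y => [y| |] // _;
  rewrite ?gt0_muley ?lte_fin //.
exact: ltNyr.
Qed.

Lemma pos_comb_fin_num {a b r : R} {x y : \bar R} : (0 < a)%R -> (0 < b)%R ->
  x != -oo -> y != -oo -> a%:E * x + b%:E * y <= r%:E ->
  x \is a fin_num /\ y \is a fin_num.
Proof.
move=> a0 b0; case: x => [x| |] // _; case: y => [y| |] // _;
  by rewrite ?gt0_muley ?lte_fin.
Qed.

End positive_combination.

Section combinations.
Context {R : realType} {n : nat}.
Implicit Types (t : R) (x u : 'rV[R]_n).

Lemma dotp_cmb t (x0 x1 y0 y1 : 'rV[R]_n) :
  (1 - t) * dotp x0 y0 + t * dotp x1 y1 =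
  dotp (cmb t x0 x1) (cmb t y0 y1) + t * (1 - t) * dotp (x1 - x0) (y1 - y0).
Proof.
rewrite /dotp !mulr_sumr -!big_split /=; apply: eq_bigr => i _; rewrite !mxE.
ring.
Qed.

Lemma cmb_centered t x u : cmb t (x - t *: u) (x + (1 - t) *: u) = x.
Proof. by apply/rowP => i; rewrite !mxE; ring. Qed.

Lemma centered_sub t x u : (x + (1 - t) *: u) - (x - t *: u) = u.
Proof. by apply/rowP => i; rewrite !mxE; ring. Qed.

Lemma cmbxx t x : cmb t x x = x.
Proof. by apply/rowP => i; rewrite !mxE; ring. Qed.

End combinations.

Section legendre.
Context {R : realType} {n : nat}.
Implicit Types (f : 'rV[R]_n -> \bar R) (x y : 'rV[R]_n).
Local Open Scope ereal_scope.

Lemma fenchel_young f x y : (dotp x y)%:E - f x <= legendre f y.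
Proof. by apply: ereal_sup_ubound; exists x. Qed.

Lemma legendre_gtNy {f x} y : dom f x -> -oo < legendre f y.
Proof.
move=> fx; apply: lt_le_trans (fenchel_young f x y).
by move: fx; rewrite /dom /=; case: (f x) => [a| |] // _; exact: ltNyr.
Qed.

Lemma legendre_fin_num {f x} y :
  dom f x -> dom (legendre f) y -> legendre f y \is a fin_num.
Proof. by move=> fx fy; rewrite fin_numElt (legendre_gtNy y fx). Qed.

End legendre.

Section legendre_of_smooth.
Context {R : realType} {n : nat} (S f : 'rV[R]_n -> \bar R).
Hypotheses (fNy : forall x, f x != -oo%E) (f_smooth : dir_smooth S f).
Local Open Scope ereal_scope.

Lemma legendre_smooth_bound (t : R) y0 y1 (F0 F1 : R) x u : (0 < t < 1)%R ->
  legendre f y0 = F0%:E -> legendre f y1 = F1%:E ->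
  ((dotp x (cmb t y0 y1))%:E - f x) +
    (t * (1 - t))%:E * ((dotp u (y1 - y0))%:E - S u)
  <= ((1 - t) * F0 + t * F1)%:E.
Proof.
move=> /[dup] t01 /andP[t0 t1] eF0 eF1.
have t1' : (0 < 1 - t)%R by rewrite subr_gt0.
have c0 : (0 < t * (1 - t))%R by rewrite mulr_gt0.
case efx : (f x) (fNy x) => [a| |] // _; last by rewrite addNye leNye.
have fx : dom f x by rewrite /dom /= efx ltry.
set x0 := (x - t *: u)%R; set x1 := (x + (1 - t) *: u)%R.
have := f_smooth t x0 x1 t01; rewrite cmb_centered centered_sub => /(_ fx).
rewrite efx; case: (S u) => [s| |] smooth.
- rewrite -EFinM -EFinD in smooth.
  have [/EFin_fin_numP[a0 ea0] /EFin_fin_numP[a1 ea1]] :=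
    pos_comb_fin_num t1' t0 (fNy x0) (fNy x1) smooth.
  have := fenchel_young f x0 y0; have := fenchel_young f x1 y1.
  rewrite ea0 ea1 eF0 eF1 in smooth * => h1 h0.
  move: smooth h0 h1; rewrite -!EFinB -!EFinM -!EFinD !lee_fin => smooth h0 h1.
  have := dotp_cmb t x0 x1 y0 y1; rewrite cmb_centered centered_sub => e.
  have := ler_wpM2l (ltW t1') h0; have := ler_wpM2l (ltW t0) h1.
  nra.
- by rewrite /= gt0_muleNy ?lte_fin // addeNy leNye.
- rewrite gt0_muleNy ?lte_fin // addeNy in smooth.
  by have := lt_le_trans (pos_comb_gtNy t1' t0 (fNy x0) (fNy x1)) smooth.
Qed.

Lemma legendre_dir_convex :
  dom f !=set0 -> dir_convex (legendre S) (legendre f).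
Proof.
move=> [z fz] t y0 y1 /[dup] t01 /andP[t0 t1] fy0 fy1.
have c0 : (0 < t * (1 - t))%R by rewrite mulr_gt0 ?subr_gt0.
have /EFin_fin_numP[F0 eF0] := legendre_fin_num y0 fz fy0.
have /EFin_fin_numP[F1 eF1] := legendre_fin_num y1 fz fy1.
rewrite eF0 eF1 -!EFinM -EFinD /legendre -ereal_sup_pZl // image_comp.
apply: ge_ereal_supD => _ _ [x _ <-] [u _ <-].
exact: legendre_smooth_bound.
Qed.

End legendre_of_smooth.

Section legendre_of_convex.
Context {R : realType} {n : nat} (Q g : 'rV[R]_n -> \bar R).
Hypotheses (gNy : forall x, g x != -oo%E) (g_convex : dir_convex Q g).
Local Open Scope ereal_scope.

Lemma dir_convex_le0 {x} : dom g x -> Q 0%R <= 0.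
Proof.
move=> gx; have t01 : (0 < (2^-1 : R) < 1)%R by apply/andP; split; lra.
have := g_convex _ x x t01 gx gx; rewrite cmbxx subrr.
move: gx; rewrite /dom /=; case: (g x) (gNy x) => [a| |] // _ _.
rewrite -!EFinM -EFinD -mulrDl subrK mul1r.
case: (Q 0) => [q| |] //.
- by rewrite -EFinM -EFinD lee_fin => ?; apply: lee_tofin; nra.
- by rewrite gt0_muley // lte_fin; lra.
Qed.

Lemma legendre_convex_bound (t : R) y0 y1 (G q : R) x0 x1 : (0 < t < 1)%R ->
  legendre g (cmb t y0 y1) = G%:E -> legendre Q (y1 - y0) = q%:E ->
  (1 - t)%:E * ((dotp x0 y0)%:E - g x0) + t%:E * ((dotp x1 y1)%:E - g x1)
  <= (G + t * (1 - t) * q)%:E.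
Proof.
move=> /[dup] t01 /andP[t0 t1] eG eQ.
have t1' : (0 < 1 - t)%R by rewrite subr_gt0.
have c0 : (0 < t * (1 - t))%R by rewrite mulr_gt0.
case eg0 : (g x0) (gNy x0) => [a0| |] // _; last first.
  by rewrite /= gt0_muleNy ?lte_fin // addNye leNye.
case eg1 : (g x1) (gNy x1) => [a1| |] // _; last first.
  by rewrite /= gt0_muleNy ?lte_fin // addeNy leNye.
have gx0 : dom g x0 by rewrite /dom /= eg0 ltry.
have gx1 : dom g x1 by rewrite /dom /= eg1 ltry.
have := g_convex t x0 x1 t01 gx0 gx1.
rewrite eg0 eg1 -!EFinM -EFinD -[g _]mul1e => convex.
have hQ := fenchel_young Q (x1 - x0) (y1 - y0); rewrite eQ in hQ.
have QNy : Q (x1 - x0)%R != -oo by apply: contraTneq hQ => ->.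
have [/EFin_fin_numP[b eb] /EFin_fin_numP[c ec]] :=
  pos_comb_fin_num ltr01 c0 (gNy _) QNy convex.
have hG := fenchel_young g (cmb t x0 x1) (cmb t y0 y1); rewrite eG in hG.
rewrite eb ec in convex hG hQ.
move: convex hG hQ; rewrite -!EFinB -!EFinM -!EFinD !lee_fin => convex hG hQ.
have e := dotp_cmb t x0 x1 y0 y1.
have := ler_wpM2l (ltW c0) hQ.
nra.
Qed.

Lemma legendre_dir_smooth :
  dom g !=set0 -> dir_smooth (legendre Q) (legendre g).
Proof.
move=> [z gz] t y0 y1 /[dup] t01 /andP[t0 t1] gyt.
have c0 : (0 < t * (1 - t))%R by rewrite mulr_gt0 ?subr_gt0.
have /EFin_fin_numP[G eG] := legendre_fin_num _ gz gyt.
have Q0 : dom Q 0%R by exact: le_lt_trans (dir_convex_le0 gz) (ltry 0%R).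
case eQ : (legendre Q (y1 - y0)) (legendre_gtNy (y1 - y0) Q0) => [q| |] // _.
  rewrite eG -EFinM -EFinD /legendre -!ereal_sup_pZl ?subr_gt0 // !image_comp.
  apply: ge_ereal_supD => _ _ [x0 _ <-] [x1 _ <-].
  exact: legendre_convex_bound.
by rewrite gt0_muley ?lte_fin // eG addey //; exact: leey.
Qed.

End legendre_of_convex.

Theorem proposition2p9 (R : realType) (n : nat)
  (f g : 'rV[R]_n -> \bar R) (S Q : 'rV[R]_n -> \bar R) :
  (forall x, f x != -oo%E) -> (forall x, g x != -oo%E) ->
  dom f !=set0 -> convex_dom (dom f) ->
  dom g !=set0 -> convex_dom (dom g) ->
  even_fun S -> even_fun Q ->
  (dir_smooth S f -> dir_convex (legendre S) (legendre f)) /\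
  (dir_convex Q g -> dir_smooth (legendre Q) (legendre g)).
Proof.
move=> fNy gNy f_ne _ g_ne _ _ _; split => [f_smooth|g_convex].
- exact: legendre_dir_convex.
- exact: legendre_dir_smooth.
Qed.
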